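(* Let $\mathbb I$ be an index coding problem and let $V_1,\dots,V_n\in\mathbb F^3$ be a valid scalar linear index code of length $3$ for $\mathbb I$ over a finite field $\mathbb F$. Then for every type-2 alignment set of $\mathbb I$, with message set ${\cal W}'$ (the union of its triangular interfering sets), the vectors assigned to the messages of ${\cal W}'$ span a vector space of dimension exactly $2$.
   Context: Index coding setup: An index coding problem $\mathbb I$ over a finite field $\mathbb F$ consists of a set of messages ${\cal W}=\{W_1,\dots,W_n\}$ (each message is a symbol of $\mathbb F$ in the scalar setting), a set of receivers $[1:T]$, and for each receiver $j$ a demand set $D(j)\subseteq{\cal W}$ and a side-information set $S(j)\subseteq {\cal W}\setminus D(j)$. Every message is demanded by at least one receiver. For a receiver $j$ and $W_k\in D(j)$, the interfering set is $Interf_k(j)={\cal W}\setminus(\{W_k\}\cup S(j))$; if $W_k\notin D(j)$ then $Interf_k(j)=\emptyset$. A scalar linear index code of length $L$ over $\mathbb F$ is an assignment of vectors $V_1,\dots,V_n\in\mathbb F^L$ to the messages; the source broadcasts $\sum_{i=1}^n V_iW_i\in\mathbb F^L$, and the code is valid if every receiver $j$ can recover every message of $D(j)$ from the broadcast codeword and the messages in $S(j)$. Two distinct messages $W_i,W_k$ are in conflict if there is a receiver $j$ with $W_k\in D(j)$ and $W_i\in Interf_k(j)$, or a receiver $j$ with $W_i\in D(j)$ and $W_k\in Interf_i(j)$. A triangular interfering set is a subset ${\cal W}''\subseteq{\cal W}$ with $|{\cal W}''|=3$ such that there exist a receiver $j$ and a message $W_k\in D(j)\setminus{\cal W}''$ with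 ${\cal W}''\subseteq Interf_k(j)$, and at least two messages of ${\cal W}''$ are in conflict. Two distinct triangular interfering sets ${\cal W}_1,{\cal W}_2$ are adjacent if ${\cal W}_1\cap{\cal W}_2=\{W_a,W_b\}$ with $W_a,W_b$ in conflict. Two triangular interfering sets are connected if there is a finite sequence of triangular interfering sets starting at one and ending at the other in which consecutive sets are adjacent (every set is connected to itself). A type-2 alignment set is a maximal collection of pairwise connected triangular interfering sets (an equivalence class under connectedness); its message set is the union of its triangular interfering sets. *)

From HB Require Import structures.
From mathcomp Require Import all_boot all_order all_algebra all_field.
Set Implicit Arguments. Unset Strict Implicit. Unset Printing Implicit Defensive.
Import GRing.Theory.
Local Open Scope ring_scope.

(* An index coding problem with messages 'I_n and receivers 'I_T is given by
   demand sets D : 'I_T -> {set 'I_n} and side-information sets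
   S : 'I_T -> {set 'I_n}. *)

Definition ic_wf (n T : nat) (D S : 'I_T -> {set 'I_n}) : Prop :=
  (forall j, [disjoint S j & D j]) /\ (forall k : 'I_n, exists j, k \in D j).

Definition interf (n T : nat) (D S : 'I_T -> {set 'I_n}) (k : 'I_n) (j : 'I_T)
  : {set 'I_n} :=
  if k \in D j then ~: (k |: S j) else set0.

Definition conflict (n T : nat) (D S : 'I_T -> {set 'I_n}) (a b : 'I_n) : bool :=
  (a != b) &&
  [exists j, ((b \in D j) && (a \in interf D S b j))
          || ((a \in D j) && (b \in interf D S a j))].

Definition triangular (n T : nat) (D S : 'I_T -> {set 'I_n}) (W : {set 'I_n}) : bool :=
  (#|W| == 3)%N &&
  [exists j, exists k, [&& k \in D j, k \notin W & W \subset interf D S k j]] &&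
  [exists a, exists b, [&& a \in W, b \in W & conflict D S a b]].

Definition adjacent (n T : nat) (D S : 'I_T -> {set 'I_n}) (W1 W2 : {set 'I_n}) : bool :=
  [&& triangular D S W1, triangular D S W2, W1 != W2 &
    [exists a, exists b, (W1 :&: W2 == [set a; b]) && conflict D S a b]].

Definition connected (n T : nat) (D S : 'I_T -> {set 'I_n}) (W1 W2 : {set 'I_n}) : bool :=
  connect (adjacent D S) W1 W2.

Definition type2_alignment_set (n T : nat) (D S : 'I_T -> {set 'I_n})
  (A : {set {set 'I_n}}) : Prop :=
  exists2 W0, triangular D S W0 &
    A = [set W | triangular D S W && connected D S W0 W].

Definition alignment_messages (n : nat) (A : {set {set 'I_n}}) : {set 'I_n} :=
  \bigcup_(W in A) W.

Definition codeword (F : fieldType) (L n : nat) (V : 'I_n -> 'rV[F]_L)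
  (w : 'I_n -> F) : 'rV[F]_L := \sum_i w i *: V i.

(* valid scalar linear index code: each receiver j recovers each demanded
   W_k from the codeword and its side information, i.e. the demanded
   message is a function of (codeword, side information). *)
Definition valid_code (F : fieldType) (L n T : nat) (D S : 'I_T -> {set 'I_n})
  (V : 'I_n -> 'rV[F]_L) : Prop :=
  forall (j : 'I_T) (k : 'I_n), k \in D j ->
    forall w w' : 'I_n -> F,
      (forall i, i \in S j -> w i = w' i) ->
      codeword V w = codeword V w' -> w k = w' k.

From HB Require Import structures.
From mathcomp Require Import all_boot all_order all_algebra all_field.
Set Implicit Arguments. Unset Strict Implicit. Unset Printing Implicit Defensive.
Import GRing.Theory.
Local Open Scope ring_scope.

(** Decodability forces linear independence: if receiver j demands W_k, then
    V_k lies outside the span of the vectors of any set of messages that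
    interfere with W_k at j, since otherwise a nonzero message vector that
    vanishes on S(j) would be indistinguishable from 0.  Hence the vectors of
    two conflicting messages span a plane, while the three vectors of a
    triangular interfering set span a proper subspace of F^3 (it misses V_k).
    So each triangular interfering set spans exactly the plane of any of its
    conflicting pairs, adjacent sets share such a pair and thus span the same
    plane, and by connectedness the whole alignment set spans that plane. *)

Lemma sub_sumsmx_rV (F : fieldType) (I : finType) (P : pred I) (L : nat)
    (B : I -> 'rV[F]_L) (v : 'rV_L) :
  (v <= \sum_(i | P i) <<B i>>)%MS -> exists c : I -> F, v = \sum_(i | P i) c i *: B i.
Proof.
case/sub_sumsmxP => u ->.
have /fin_all_exists [c Bc] : forall i, exists c : F, u i *m <<B i>>%MS = c *: B i.
  by move=> i; apply/sub_rVP; have := submxMl (u i) <<B i>>%MS; rewrite genmxE.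
by exists c; apply: eq_bigr => i _.
Qed.

Lemma rank_adds_rV (F : fieldType) (L : nat) (u v : 'rV[F]_L) :
  u != 0 -> ~~ (v <= u)%MS -> \rank (u + v)%MS = 2%N.
Proof.
move=> u_neq0 vNu; apply/eqP; rewrite eqn_leq; apply/andP; split.
  exact: leq_trans (mxrank_adds_leqif u v) (leq_add (rank_leq_row u) (rank_leq_row v)).
have : (u < u + v)%MS by rewrite ltmxE addsmxSl addsmx_sub submx_refl.
by move/rank_ltmx; rewrite rank_rV u_neq0.
Qed.

Lemma rank_lt_notin (F : fieldType) (m L : nat) (U : 'M[F]_(m, L)) (v : 'rV_L) :
  ~~ (v <= U)%MS -> (\rank U < L)%N.
Proof.
apply: contraR; rewrite -leqNgt => rankU; apply: submx_full.
by rewrite /row_full eqn_leq rank_leq_col rankU.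
Qed.

Lemma in_interf (n T : nat) (D S : 'I_T -> {set 'I_n}) j k i :
  k \in D j -> (i \in interf D S k j) = (i != k) && (i \notin S j).
Proof. by move=> Dk; rewrite /interf Dk !inE negb_or. Qed.

Section Decoding.

Variables (F : fieldType) (L n T : nat) (D S : 'I_T -> {set 'I_n}).
Variable V : 'I_n -> 'rV[F]_L.
Hypotheses (wf : ic_wf D S) (vc : valid_code D S V).

Local Notation span X := (\sum_(i in X) <<V i>>)%MS.

Lemma demanded_notin_side j k : k \in D j -> k \notin S j.
Proof. by move=> Dk; rewrite (disjointFl (proj1 wf j) Dk). Qed.

Lemma demanded_notin_span_interf j k (X : {set 'I_n}) :
  k \in D j -> X \subset interf D S k j -> ~~ (V k <= span X)%MS.
Proof.
move=> Dk sX; apply/negP => /sub_sumsmx_rV [c Vk].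
have inX i : i \in X -> (i != k) && (i \notin S j).
  by move/(subsetP sX); rewrite in_interf.
pose w i := (i == k)%:R - (if i \in X then c i else 0).
have wk : w k = 1.
  by rewrite /w eqxx ifF ?subr0 //; apply/negP => /inX; rewrite eqxx.
have w_side i : i \in S j -> w i = 0.
  move=> iS; rewrite /w ifF; last by apply/negP => /inX; rewrite iS andbF.
  have /negPf -> : i != k by apply: contraTneq iS => ->; apply: demanded_notin_side.
  by rewrite subr0.
have w_code : codeword V w = codeword V (fun=> 0).
  rewrite /codeword [RHS]big1 => [|i _]; last by rewrite scale0r.
  rewrite (eq_bigr (fun i => (i == k)%:R *: V i - (if i \in X then c i *: V i else 0)));
    last by move=> i _; rewrite /w scalerBl; case: ifP; rewrite ?scale0r.
  rewrite sumrB -big_mkcond /= (bigD1 k) //= eqxx scale1r big1 => [|i /negbTE ->];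
    last by rewrite scale0r.
  by rewrite addr0 -Vk subrr.
by move: (vc Dk w_side w_code); rewrite wk => /eqP; rewrite oner_eq0.
Qed.

Lemma code_vector_neq0 a : V a != 0.
Proof.
have [j Dj] := proj2 wf a.
by have := demanded_notin_span_interf Dj (sub0set _); rewrite big_set0 submx0.
Qed.

Lemma demanded_notin_line_interf a b j : b \in D j -> a \in interf D S b j -> ~~ (V b <= V a)%MS.
Proof.
move=> Db ai; have := demanded_notin_span_interf Db (X := [set a]).
by rewrite big_set1 sub1set genmxE; apply.
Qed.

Lemma rank_conflict a b : conflict D S a b -> \rank (<<V a>> + <<V b>>)%MS = 2%N.
Proof.
rewrite (adds_eqmx (genmxE _) (genmxE _)).
case/andP => _ /existsP [j /orP [/andP [Db ai] | /andP [Da bi]]].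
  exact/rank_adds_rV/(demanded_notin_line_interf Db ai)/code_vector_neq0.
by rewrite addsmxC; exact/rank_adds_rV/(demanded_notin_line_interf Da bi)/code_vector_neq0.
Qed.

End Decoding.

Section AlignmentPlane.

Variables (F : fieldType) (n T : nat) (D S : 'I_T -> {set 'I_n}).
Variable V : 'I_n -> 'rV[F]_3.
Hypotheses (wf : ic_wf D S) (vc : valid_code D S V).

Local Notation span X := (\sum_(i in X) <<V i>>)%MS.

Lemma triangular_rank_le2 W : triangular D S W -> (\rank (span W) <= 2)%N.
Proof.
case/andP => /andP [_ /existsP [j /existsP [k /and3P [Dk _ sW]]]] _.
exact: rank_lt_notin (demanded_notin_span_interf wf vc Dk sW).
Qed.

Lemma triangular_span_conflict W a b :
    triangular D S W -> a \in W -> b \in W -> conflict D S a b ->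
  (<<V a>> + <<V b>> == span W)%MS.
Proof.
move=> tW aW bW cab.
have sub_span : (<<V a>> + <<V b>> <= span W)%MS.
  by rewrite addsmx_sub (sumsmx_sup a) ?(sumsmx_sup b).
rewrite -(mxrank_leqif_eq sub_span).2 eqn_leq mxrankS //=.
by rewrite (rank_conflict wf vc cab) triangular_rank_le2.
Qed.

Lemma triangular_rank W : triangular D S W -> \rank (span W) = 2%N.
Proof.
move=> tW; have /andP [_ /existsP [a /existsP [b /and3P [aW bW cab]]]] := tW.
by rewrite -(eqmx_rank (triangular_span_conflict tW aW bW cab)) (rank_conflict wf vc cab).
Qed.

Lemma adjacent_span W1 W2 : adjacent D S W1 W2 -> (span W1 :=: span W2)%MS.
Proof.
case/and4P => t1 t2 _ /existsP [a /existsP [b /andP [/eqP W12 cab]]].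
have /setIP [a1 a2] : a \in W1 :&: W2 by rewrite W12 !inE eqxx.
have /setIP [b1 b2] : b \in W1 :&: W2 by rewrite W12 !inE eqxx orbT.
apply: eqmx_trans (eqmx_sym (eqmxP (triangular_span_conflict t1 a1 b1 cab))) _.
exact/eqmxP/(triangular_span_conflict t2 a2 b2 cab).
Qed.

Lemma connected_span W1 W2 : connected D S W1 W2 -> (span W1 :=: span W2)%MS.
Proof.
case/connectP => p + ->; elim: p W1 => [|W p IHp] W1 /=; first by [].
by case/andP => /adjacent_span W1W /IHp; apply: eqmx_trans.
Qed.

End AlignmentPlane.

Theorem theorem4 (F : finFieldType) (n T : nat) (D S : 'I_T -> {set 'I_n})
  (V : 'I_n -> 'rV[F]_3) :
  ic_wf D S -> valid_code D S V ->
  forall A : {set {set 'I_n}}, type2_alignment_set D S A ->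
  \rank (\sum_(i in alignment_messages A) <<V i>>)%MS = 2%N.
Proof.
move=> wf vc A [W0 tW0 ->]; apply: eq_trans (triangular_rank wf vc tW0).
apply/eqmx_rank/andP; split; apply/sumsmx_subP => i.
  case/bigcupP => W; rewrite inE => /andP [_ /(connected_span wf vc) W0W] iW.
  by rewrite W0W (sumsmx_sup i).
move=> iW0; apply: (sumsmx_sup i) => //; apply/bigcupP; exists W0 => //.
by rewrite inE tW0; apply: connect0.
Qed.
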